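(* The acute hat has no single-piece unfolding. That is, there is no set $S$ of interior edges of the acute hat such that both of the following hold: (a) cutting the hat along $S$ leaves it connected; (b) the resulting surface can be laid out isometrically in the plane, face by face, without overlap (injectively).
   Context: A hat is a triangulated closed disk with seven vertices $a_1,a_2,a_3$ (on the boundary), $p_1,p_2,p_3$ and $o$ (the center), both of the latter groups interior. Indices are taken mod 3. It has nine triangular faces: - the brim triangles $a_i a_{i+1} p_{i+2}$; - the band triangles $a_i p_{i+1} p_{i+2}$; - the crown triangles $o\, p_i p_{i+1}$. Its boundary is the cycle $a_1a_2a_3$. The acute hat is the hat whose faces have the following metric shapes, all acute isosceles triangles: - each brim triangle $a_i a_{i+1} p_{i+2}$ has apex angle $85^\circ$ at $p_{i+2}$ and base angles $47.5^\circ$ at $a_i,a_{i+1}$; - each band triangle $a_i p_{i+1}p_{i+2}$ has apex angle $10^\circ$ at $a_i$ and base angles $85^\circ$; - each crown triangle $o\,p_ip_{i+1}$ is congruent to the band triangles, with apex angle $10^\circ$ at $o$ and base angles $85^\circ$. Consequently each $p_i$ has total angle $425^\circ$, so it is negatively curved, and $o$ has total angle $30^\circ$, so it is positively curved. The boundary edges $a_ia_{i+1}$ all have equal length. *)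

From Stdlib Require Import Reals Relations.
Open Scope R_scope.

Inductive I3 : Type := i0 | i1 | i2.
Definition nx (i : I3) : I3 := match i with i0 => i1 | i1 => i2 | i2 => i0 end.

(** The seven vertices of the hat: a_i (boundary), p_i, and the center o. *)
Inductive vtx : Type := A (i : I3) | P (i : I3) | O.

Inductive face : Type :=
  | Brim (i : I3)
  | Band (i : I3)
  | Crown (i : I3).

Definition face_verts (f : face) : vtx * vtx * vtx :=
  match f with
  | Brim i => (A i, A (nx i), P (nx (nx i)))
  | Band i => (A i, P (nx i), P (nx (nx i)))
  | Crown i => (O, P i, P (nx i))
  end.

Definition in_face (f : face) (v : vtx) : Prop :=
  let '(x, y, z) := face_verts f in v = x \/ v = y \/ v = z.

Definition interior_edge (u v : vtx) : Prop :=
  u <> v /\ exists f g : face, f <> g /\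
    in_face f u /\ in_face f v /\ in_face g u /\ in_face g v.

(** Metric of the acute hat (scale L = length of the legs a_i p_j and o p_j).
    An isosceles triangle with legs [leg] and apex angle [apex] has base
    [2 * leg * sin (apex/2)]. *)
Definition deg (x : R) : R := x * PI / 180.
Definition base_len (leg apex : R) : R := 2 * leg * sin (apex / 2).

(* Brim triangles: apex 85 deg at p, legs a-p, base a-a.
   Band triangles: apex 10 deg at a, legs a-p, base p-p.
   Crown triangles: congruent to band, apex 10 deg at o, legs o-p, base p-p. *)
Definition len (L : R) (u v : vtx) : R :=
  match u, v with
  | A _, P _ | P _, A _ | O, P _ | P _, O => L
  | P _, P _ => base_len L (deg 10)
  | A _, A _ => base_len L (deg 85)
  | _, _ => 0
  end.

Definition pt := (R * R)%type.
Definition dist (p q : pt) : R :=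
  sqrt ((fst p - fst q) ^ 2 + (snd p - snd q) ^ 2).

Definition cut (S : vtx -> vtx -> Prop) (u v : vtx) : Prop := S u v \/ S v u.

Definition glued (S : vtx -> vtx -> Prop) (f g : face) (u v : vtx) : Prop :=
  f <> g /\ u <> v /\ in_face f u /\ in_face f v /\ in_face g u /\ in_face g v
  /\ ~ cut S u v.

Definition cut_connected (S : vtx -> vtx -> Prop) : Prop :=
  forall f g : face,
    clos_refl_trans face (fun f g => exists u v, glued S f g u v) f g.

(** Points of the cut surface: a face together with barycentric weights
    on the vertex labels, supported on that face. *)
Definition valid_pt (f : face) (w : vtx -> R) : Prop :=
  (forall v, 0 <= w v) /\ (forall v, ~ in_face f v -> w v = 0) /\
  let '(x, y, z) := face_verts f in w x + w y + w z = 1.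

(** One gluing step of the cut surface: the same point seen in two faces
    glued along an uncut edge containing it. *)
Definition glue_step (S : vtx -> vtx -> Prop)
    (p1 p2 : face * (vtx -> R)) : Prop :=
  let (f, w) := p1 in let (g, w') := p2 in
  w = w' /\ exists u v, glued S f g u v /\
    (forall x, x <> u -> x <> v -> w x = 0).

Definition same_pt (S : vtx -> vtx -> Prop) : relation (face * (vtx -> R)) :=
  clos_refl_sym_trans _ (glue_step S).

(** Layout: each face f is placed with its corner v at [q f v]; the image of
    a point is the corresponding affine combination. *)
Definition layout := face -> vtx -> pt.

Definition img (q : layout) (f : face) (w : vtx -> R) : pt :=
  let '(x, y, z) := face_verts f in
  (w x * fst (q f x) + w y * fst (q f y) + w z * fst (q f z),
   w x * snd (q f x) + w y * snd (q f y) + w z * snd (q f z)).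

Definition is_unfolding (L : R) (S : vtx -> vtx -> Prop) (q : layout) : Prop :=
  (forall f u v, in_face f u -> in_face f v -> u <> v ->
     dist (q f u) (q f v) = len L u v) /\
  (forall f g u v, glued S f g u v -> q f u = q g u /\ q f v = q g v) /\
  (forall f g w w', valid_pt f w -> valid_pt g w' ->
     img q f w = img q g w' -> same_pt S (f, w) (g, w')).

(* The proof is local-to-global.  Laying out a face glued along an uncut edge
   [v y] to an already placed face forces it to keep turning around [v] in the
   same direction (lemma [hinge_step]; folding back would overlap), so a fan of
   faces around a vertex is laid out rigidly ([fan_unroll]).  This gives three
   families of edge sets ("windows") that an unfolding must cut somewhere:
   - the cone window: the three edges at [o], whose three corners of 10 degrees
     cannot close up ([cone_obstruction]);
   - saddle windows: four consecutive edges at a [p_i], which carries five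
     corners of 85 degrees, more than a full turn ([saddle_obstruction]);
   - strip windows: three edges at [p_i] and two at a neighbouring [p_j], which
     force a vertex into the interior of another face ([strip_obstruction]).
   Finally an exhaustive check over the 2^12 cut patterns of the twelve interior
   edges shows that every pattern cutting an edge of each window disconnects
   the hat. *)

From Pilot Require Import Defs.
From Stdlib Require Import Reals Relations Lra Lia List ClassicalEpsilon.
Import ListNotations.
Open Scope R_scope.

Lemma vtx_eq_dec (u v : vtx) : {u = v} + {u <> v}.
Proof. decide equality; decide equality. Defined.

Definition triangle (f : face) (v x y : vtx) : Prop :=
  in_face f v /\ in_face f x /\ in_face f y /\ v <> x /\ x <> y /\ v <> y.

Lemma triangle_swap f v x y : triangle f v x y -> triangle f v y x.
Proof. unfold triangle. intuition congruence. Qed.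

Lemma sum_corners (f : face) (v x y : vtx) (h : vtx -> R) :
  triangle f v x y ->
  (let '(a, b, c) := face_verts f in h a + h b + h c) = h v + h x + h y.
Proof.
  unfold triangle, in_face.
  assert (D : let '(a, b, c) := face_verts f in a <> b /\ b <> c /\ a <> c)
    by (destruct f as [i|i|i]; destruct i; simpl; repeat split; discriminate).
  destruct (face_verts f) as [[a b] c]; destruct D as [d1 [d2 d3]].
  intros [[-> | [-> | ->]] [[-> | [-> | ->]] [[-> | [-> | ->]] [n1 [n2 n3]]]]];
    congruence || ring.
Qed.

Definition bary (v x y : vtx) (a b c : R) : vtx -> R :=
  fun k => if vtx_eq_dec k v then a else if vtx_eq_dec k x then b
           else if vtx_eq_dec k y then c else 0.

Lemma bary_v v x y a b c : bary v x y a b c v = a.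
Proof. unfold bary. destruct (vtx_eq_dec v v); congruence. Qed.

Lemma bary_x v x y a b c : x <> v -> bary v x y a b c x = b.
Proof. unfold bary. intros. repeat destruct (vtx_eq_dec _ _); congruence. Qed.

Lemma bary_y v x y a b c : y <> v -> y <> x -> bary v x y a b c y = c.
Proof. unfold bary. intros. repeat destruct (vtx_eq_dec _ _); congruence. Qed.

Definition affine (a b c : R) (X Y Z : pt) : pt :=
  (a * fst X + b * fst Y + c * fst Z, a * snd X + b * snd Y + c * snd Z).

Section FacePoints.
Variables (f : face) (v x y : vtx).
Hypothesis Hf : triangle f v x y.

Lemma bary_valid (a b c : R) :
  0 <= a -> 0 <= b -> 0 <= c -> a + b + c = 1 -> valid_pt f (bary v x y a b c).
Proof.
  intros Ha Hb Hc Hs. pose proof Hf as [Hv [Hx [Hy [Dvx [Dxy Dvy]]]]]. split; [|split].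
  - intro k. unfold bary. repeat destruct (vtx_eq_dec _ _); lra.
  - intros k Hk. unfold bary.
    repeat destruct (vtx_eq_dec _ _); subst; tauto || reflexivity.
  - pose proof (sum_corners f v x y (bary v x y a b c) Hf) as E.
    destruct (face_verts f) as [[a0 b0] c0]. rewrite E.
    rewrite bary_v, bary_x, bary_y by congruence. exact Hs.
Qed.

Lemma img_bary (q : layout) (a b c : R) :
  img q f (bary v x y a b c) = affine a b c (q f v) (q f x) (q f y).
Proof.
  pose proof (sum_corners f v x y (fun k => bary v x y a b c k * fst (q f k)) Hf) as E1.
  pose proof (sum_corners f v x y (fun k => bary v x y a b c k * snd (q f k)) Hf) as E2.
  destruct Hf as [_ [_ [_ [Dvx [Dxy Dvy]]]]].
  unfold img. cbn beta in E1, E2.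
  destruct (face_verts f) as [[a0 b0] c0]. rewrite E1, E2.
  rewrite bary_v, bary_x, bary_y by congruence. reflexivity.
Qed.

End FacePoints.

Lemma same_pt_inv S p1 p2 : same_pt S p1 p2 ->
  snd p1 = snd p2 /\
  (p1 = p2 \/ exists u v, forall x, x <> u -> x <> v -> snd p1 x = 0).
Proof.
  induction 1 as [[f w] [g w'] H| p |p1 p2 _ [IH1 IH2]|p1 p2 p3 _ [IH1 IH2] _ [IH3 IH4]].
  - destruct H as [Hw [u [v [_ Hz]]]]. split; [exact Hw|]. right. exists u, v. exact Hz.
  - split; auto.
  - split; [auto|]. destruct IH2 as [E|[u [v Hz]]]; [left; auto|].
    right. exists u, v. rewrite <- IH1. exact Hz.
  - split; [congruence|]. destruct IH2 as [<-|Hz]; [exact IH4|right; exact Hz].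
Qed.

Definition d2 (p p' : pt) : R := (fst p - fst p')^2 + (snd p - snd p')^2.

Lemma dist_d2 (p p' : pt) (l : R) : Defs.dist p p' = l -> d2 p p' = l^2.
Proof.
  unfold Defs.dist, d2. intros <-.
  rewrite pow2_sqrt; [reflexivity|]. apply Rplus_le_le_0_compat; apply pow2_ge_0.
Qed.

Definition orthonormal (u w : pt) : Prop :=
  fst u ^2 + snd u ^2 = 1 /\ fst w ^2 + snd w ^2 = 1 /\ fst u * fst w + snd u * snd w = 0.

Definition polar (V u w : pt) (r t : R) : pt :=
  (fst V + r * (cos t * fst u + sin t * fst w), snd V + r * (cos t * snd u + sin t * snd w)).

Lemma frame_coordinates (V u w D : pt) : orthonormal u w ->
  let X := (fst D - fst V) * fst u + (snd D - snd V) * snd u in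
  let Y := (fst D - fst V) * fst w + (snd D - snd V) * snd w in
  D = (fst V + (X * fst u + Y * fst w), snd V + (X * snd u + Y * snd w)) /\
  d2 D V = X^2 + Y^2.
Proof.
  destruct V as [v1 v2], u as [u1 u2], w as [w1 w2], D as [x y].
  unfold orthonormal, d2; cbn [fst snd].
  intros [O1 [O2 O3]].
  (* the rows of an orthogonal matrix are orthonormal as well *)
  set (dl := u1 * w2 - u2 * w1).
  assert (Hd : dl^2 = 1).
  { replace (dl^2) with ((u1^2+u2^2)*(w1^2+w2^2) - (u1*w1+u2*w2)^2) by (unfold dl; ring).
    rewrite O1, O2, O3. ring. }
  assert (E1 : w1 = - dl * u2).
  { replace w1 with (u1*(u1*w1+u2*w2) - w1*(u1^2+u2^2-1) + (- dl*u2)) at 1 by (unfold dl; ring).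
    rewrite O1, O3. ring. }
  assert (E2 : w2 = dl * u1).
  { replace w2 with (u2*(u1*w1+u2*w2) - w2*(u1^2+u2^2-1) + (dl*u1)) at 1 by (unfold dl; ring).
    rewrite O1, O3. ring. }
  clearbody dl. subst w1 w2.
  split; [f_equal|].
  - replace (v1 + _) with (v1 + (x - v1) * (u1^2 + dl^2 * u2^2) + (y - v2) * u1 * u2 * (1 - dl^2))
      by ring. rewrite Hd, Rmult_1_l, O1. ring.
  - replace (v2 + _) with (v2 + (y - v2) * (dl^2 * u1^2 + u2^2) + (x - v1) * u1 * u2 * (1 - dl^2))
      by ring. rewrite Hd, Rmult_1_l, O1. ring.
  - replace (_ + ((x - v1) * (- dl * u2) + (y - v2) * (dl * u1)) ^ 2)
      with (((x - v1)^2 + (y - v2)^2) * (u1^2 + u2^2) * dl^2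
            + ((x - v1) * u1 + (y - v2) * u2)^2 * (1 - dl^2)) by ring.
    rewrite Hd, O1. ring.
Qed.

Lemma circle_directions (X Y r al th : R) :
  X^2 + Y^2 = r^2 -> cos al * X + sin al * Y = r * cos th ->
  (X = r * cos (al + th) /\ Y = r * sin (al + th)) \/
  (X = r * cos (al - th) /\ Y = r * sin (al - th)).
Proof.
  intros HN HC.
  rewrite cos_plus, sin_plus, cos_minus, sin_minus.
  pose proof (sin2_cos2 al) as Pa. pose proof (sin2_cos2 th) as Pt. unfold Rsqr in Pa, Pt.
  set (Z := - sin al * X + cos al * Y).
  assert (HZ : (Z - r * sin th) * (Z + r * sin th) = 0).
  { assert (T : (cos al * X + sin al * Y)^2 + Z^2 = X^2 + Y^2).
    { replace (X^2 + Y^2) with ((X^2 + Y^2) * (sin al * sin al + cos al * cos al))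
        by (rewrite Pa; ring).
      unfold Z. ring. }
    rewrite HC, HN in T.
    replace ((Z - r * sin th) * (Z + r * sin th))
      with (Z^2 - r^2 * (sin th * sin th + cos th * cos th) + (r * cos th)^2) by ring.
    rewrite Pt. lra. }
  assert (HX : X = (cos al * X + sin al * Y) * cos al - Z * sin al).
  { replace X with (X * (sin al * sin al + cos al * cos al)) at 1 by (rewrite Pa; ring).
    unfold Z. ring. }
  assert (HY : Y = (cos al * X + sin al * Y) * sin al + Z * cos al).
  { replace Y with (Y * (sin al * sin al + cos al * cos al)) at 1 by (rewrite Pa; ring).
    unfold Z. ring. }
  clearbody Z. rewrite HC in HX, HY.
  apply Rmult_integral in HZ as [HZ|HZ]; [left|right].
  - replace Z with (r * sin th) in HX, HY by lra.
    rewrite HX, HY at 1. split; ring.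
  - replace Z with (- (r * sin th)) in HX, HY by lra.
    rewrite HX, HY at 1. split; ring.
Qed.

Lemma hinge V u w X r1 r2 al th : orthonormal u w -> 0 < r1 ->
  d2 X V = r2^2 ->
  d2 X (polar V u w r1 al) = r1^2 + r2^2 - 2*r1*r2*cos th ->
  X = polar V u w r2 (al + th) \/ X = polar V u w r2 (al - th).
Proof.
  intros Ou Hr1 H1 H2.
  destruct (frame_coordinates V u w X Ou) as [EX NX].
  set (x := (fst X - fst V) * fst u + (snd X - snd V) * snd u) in *.
  set (y := (fst X - fst V) * fst w + (snd X - snd V) * snd w) in *.
  destruct Ou as [O1 [O2 O3]].
  pose proof (sin2_cos2 al) as Pa. unfold Rsqr in Pa.
  assert (E : d2 X (polar V u w r1 al)
              = x^2 + y^2 - 2 * r1 * (cos al * x + sin al * y) + r1^2).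
  { rewrite EX at 1. unfold d2, polar; cbn [fst snd].
    match goal with |- ?lhs = _ =>
      replace lhs with ((x - r1 * cos al)^2 * (fst u ^2 + snd u ^2)
                        + (y - r1 * sin al)^2 * (fst w ^2 + snd w ^2)
                        + 2 * (x - r1 * cos al) * (y - r1 * sin al)
                            * (fst u * fst w + snd u * snd w)) by ring end.
    rewrite O1, O2, O3.
    replace (r1^2) with (r1^2 * (sin al * sin al + cos al * cos al)) by (rewrite Pa; ring).
    ring. }
  assert (Hc : cos al * x + sin al * y = r2 * cos th).
  { apply Rmult_eq_reg_l with (2 * r1); [|lra]. lra. }
  destruct (circle_directions x y r2 al th ltac:(lra) Hc) as [[E1 E2]|[E1 E2]];
    [left|right]; rewrite EX, E1, E2; unfold polar; f_equal; ring.
Qed.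

Lemma frame_exists V X0 X1 r0 r1 th : 0 < r0 ->
  d2 X0 V = r0^2 -> d2 X1 V = r1^2 -> d2 X1 X0 = r0^2 + r1^2 - 2*r0*r1*cos th ->
  exists u w, orthonormal u w /\ X0 = polar V u w r0 0 /\ X1 = polar V u w r1 th.
Proof.
  intros H0 E0 E1 E2.
  set (a := (fst X0 - fst V) / r0). set (b := (snd X0 - snd V) / r0).
  assert (Hab : a^2 + b^2 = 1).
  { unfold a, b. replace ((_ / r0) ^ 2 + (_ / r0) ^ 2) with (d2 X0 V / r0^2)
      by (unfold d2; field; lra).
    rewrite E0. field. lra. }
  assert (HX0 : forall w, X0 = polar V (a, b) w r0 0).
  { intro w. unfold polar, a, b. cbn [fst snd]. rewrite cos_0, sin_0.
    destruct X0 as [x0 y0]; cbn [fst snd]. f_equal; field; lra. }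
  rewrite (HX0 (-b, a)) in E2.
  assert (Ou : orthonormal (a, b) (-b, a)) by (repeat split; cbn [fst snd]; lra).
  destruct (hinge V (a, b) (-b, a) X1 r0 r1 0 th Ou H0 E1 E2) as [Hp|Hm].
  - exists (a, b), (-b, a). split; [exact Ou|split; [apply HX0|]].
    rewrite Hp. f_equal; f_equal; ring.
  - exists (a, b), (b, -a). split; [repeat split; cbn [fst snd]; lra|split; [apply HX0|]].
    rewrite Hm. unfold polar. cbn [fst snd].
    rewrite Rminus_0_l, cos_neg, sin_neg. f_equal; ring.
Qed.

Lemma polar_2PI V u w r : polar V u w r (2*PI) = polar V u w r 0.
Proof. unfold polar. rewrite cos_2PI, sin_2PI, cos_0, sin_0. reflexivity. Qed.

Lemma polar_minus_PI V u w r t : polar V u w r (t - PI) =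
  (fst V - r * (cos t * fst u + sin t * fst w), snd V - r * (cos t * snd u + sin t * snd w)).
Proof. unfold polar. rewrite cos_minus, sin_minus, cos_PI, sin_PI. f_equal; ring. Qed.

Lemma polar_same_point V u w r t : orthonormal u w -> 0 < r ->
  polar V u w r t = polar V u w r 0 -> cos t = 1.
Proof.
  intros [O1 [_ O3]] Hr E. unfold polar in E. rewrite cos_0, sin_0 in E.
  injection E as E1 E2.
  assert (F1 : cos t * fst u + sin t * fst w = fst u) by (apply Rmult_eq_reg_l with r; lra).
  assert (F2 : cos t * snd u + sin t * snd w = snd u) by (apply Rmult_eq_reg_l with r; lra).
  replace (cos t)
    with (fst u * (cos t * fst u + sin t * fst w) + snd u * (cos t * snd u + sin t * snd w)
          - sin t * (fst u * fst w + snd u * snd w) - cos t * (fst u ^ 2 + snd u ^ 2 - 1))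
    by ring.
  rewrite F1, F2, O3, O1. lra.
Qed.

Lemma polar_back V u w r t : polar (polar V u w r t) u w r (t - PI) = V.
Proof. rewrite polar_minus_PI. destruct V. unfold polar; cbn [fst snd]. f_equal; ring. Qed.

Lemma polar_isosceles V u w l a th :
  polar V u w l a = polar (polar V u w (2 * l * cos th) (a + th)) u w l (a + 2 * th - PI).
Proof.
  rewrite polar_minus_PI. unfold polar; cbn [fst snd].
  set (x := a + th). replace (a + 2 * th) with (x + th) by (unfold x; ring).
  replace a with (x - th) by (unfold x; ring).
  rewrite cos_minus, sin_minus, cos_plus, sin_plus. f_equal; ring.
Qed.

(* The corner of [f] at [v], between [x] and [y], has angle [th] (law of cosines). *)
Definition corner (L : R) (f : face) (v x y : vtx) (th : R) : Prop :=
  triangle f v x y /\ 0 < len L v x /\ 0 < len L v y /\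
  (len L x y)^2 = (len L v x)^2 + (len L v y)^2 - 2 * len L v x * len L v y * cos th.

Lemma len_sym L u v : len L u v = len L v u.
Proof. destruct u, v; reflexivity. Qed.

Definition th85 : R := deg 85.

Lemma sin_deg_pos k : 0 < k < 180 -> 0 < sin (deg k).
Proof.
  intros Hk. pose proof PI_RGT_0. unfold deg. apply sin_gt_0.
  - apply Rmult_lt_0_compat; [nra|lra].
  - apply Rmult_lt_reg_r with 180; [lra|]. field_simplify; nra.
Qed.

Lemma th85_range : 2 * PI / 5 < th85 < PI / 2.
Proof. pose proof PI_RGT_0. unfold th85, deg. split; lra. Qed.

Lemma cos_30_ne_1 : cos (3 * deg 10) <> 1.
Proof.
  replace (3 * deg 10) with (PI / 6) by (unfold deg; field). rewrite cos_PI6.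
  intro H. assert (sqrt 3 * sqrt 3 = 3) by (apply sqrt_sqrt; lra). nra.
Qed.

Lemma base_len_law l x : (base_len l x)^2 = l^2 + l^2 - 2 * l * l * cos x.
Proof.
  unfold base_len. replace x with (2 * (x / 2)) at 2 by field. rewrite cos_2a_sin. ring.
Qed.

Lemma base_len_10 l : base_len l (deg 10) = 2 * l * cos th85.
Proof.
  unfold base_len, th85, deg. rewrite <- sin_shift. f_equal. f_equal. field.
Qed.

Lemma base_len_10_pos l : 0 < l -> 0 < base_len l (deg 10).
Proof.
  intro Hl. unfold base_len. replace (deg 10 / 2) with (deg 5) by (unfold deg; field).
  pose proof (sin_deg_pos 5 ltac:(lra)). nra.
Qed.

Ltac destruct_triangle T :=
  let Hv := fresh in let Hx := fresh in let Hy := fresh in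
  pose proof T as [Hv [Hx [Hy _]]];
  unfold in_face in Hv, Hx, Hy; cbn in Hv, Hx, Hy;
  destruct Hv as [Hv|[Hv|Hv]]; try discriminate Hv; try (injection Hv as Hv; subst);
  destruct Hx as [-> | [-> | ->]]; destruct Hy as [-> | [-> | ->]];
  destruct T as [_ [_ [_ [? [? ?]]]]]; try congruence.

Lemma corner_at_P L f i x y : 0 < L -> triangle f (P i) x y -> corner L f (P i) x y th85.
Proof.
  intros HL T. split; [exact T|].
  pose proof (base_len_10_pos L HL) as Hdd_pos. pose proof (base_len_10 L) as Hdd.
  destruct f as [j|j|j]; destruct j; destruct_triangle T; cbn [len];
    repeat split; try assumption;
    first [ apply base_len_law | rewrite Hdd; ring ].
Qed.

Lemma corner_at_O L f x y : 0 < L -> triangle f O x y -> corner L f O x y (deg 10).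
Proof.
  intros HL T. split; [exact T|].
  destruct f as [j|j|j]; destruct j; destruct_triangle T; cbn [len];
    repeat split; try assumption; apply base_len_law.
Qed.

Lemma sin_minus_2PI x : sin (x - 2 * PI) = sin x.
Proof. rewrite sin_minus, cos_2PI, sin_2PI. ring. Qed.

Lemma strip_sines :
  sin (th85 - 4 * th85) = cos (deg 15) /\ sin (th85 - 7 * th85) = - / 2 /\
  sin (4 * th85) = - sin (deg 20) /\ sin (7 * th85) = - cos (deg 35).
Proof.
  unfold th85, deg. repeat split.
  - replace (85 * PI / 180 - 4 * (85 * PI / 180)) with ((15 * PI / 180 + PI / 2) - 2 * PI)
      by field.
    rewrite sin_minus_2PI, sin_plus, cos_PI2, sin_PI2. ring.
  - replace (85 * PI / 180 - 7 * (85 * PI / 180)) with ((PI / 6 + PI) - 2 * PI - 2 * PI)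
      by field.
    rewrite !sin_minus_2PI, neg_sin, sin_PI6. field.
  - replace (4 * (85 * PI / 180)) with (- (20 * PI / 180) + 2 * PI) by field.
    rewrite sin_plus, cos_2PI, sin_2PI, sin_neg. ring.
  - replace (7 * (85 * PI / 180)) with ((PI / 2 - 35 * PI / 180) + PI + 2 * PI) by field.
    rewrite sin_plus, cos_2PI, sin_2PI, neg_sin, sin_shift. ring.
Qed.

(* Positivity of the barycentric coordinates of the overlapping point in the
   strip obstruction. *)
Lemma strip_coefficients :
  let K1 := sin (th85 - 4 * th85) - sin (th85 - 7 * th85) in
  let K2 := sin (4 * th85) - sin (7 * th85) in
  0 < K1 /\ 0 < K2 /\ 0 < sin th85 - 2 * cos th85 * K1 - K2.
Proof.
  destruct strip_sines as [E3 [E6 [E4 E7]]]. cbv zeta. rewrite E3, E6, E4, E7.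
  pose proof PI_RGT_0 as Hpi.
  assert (Hsin : sin th85 = cos (deg 5))
    by (unfold th85, deg; rewrite <- cos_shift; f_equal; field).
  assert (Hcos : cos th85 = sin (deg 5))
    by (unfold th85, deg; rewrite <- sin_shift; f_equal; field).
  assert (C15 : 0 < cos (deg 15)) by (apply cos_gt_0; unfold deg; lra).
  (* sin 20 < sin 55 = cos 35 *)
  assert (S20 : sin (deg 20) < cos (deg 35)).
  { replace (cos (deg 35)) with (sin (deg 55))
      by (unfold deg; rewrite <- cos_shift; f_equal; field).
    apply sin_increasing_1; unfold deg; lra. }
  assert (Prod : 2 * sin (deg 5) * cos (deg 15) = sin (deg 20) - sin (deg 10)).
  { replace (deg 20) with (deg 15 + deg 5) by (unfold deg; field).
    replace (deg 10) with (deg 15 - deg 5) by (unfold deg; field).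
    rewrite sin_plus, sin_minus. ring. }
  assert (C35 : cos (deg 35) < cos (deg 5)) by (apply cos_decreasing_1; unfold deg; lra).
  assert (S10 : sin (deg 5) < sin (deg 10)) by (apply sin_increasing_1; unfold deg; lra).
  rewrite Hsin, Hcos. repeat split; lra.
Qed.

Section Unfolding.
Variables (L : R) (cutset : vtx -> vtx -> Prop) (q : layout).
Hypothesis HU : is_unfolding L cutset q.

Lemma layout_d2 f u v : in_face f u -> in_face f v -> u <> v ->
  d2 (q f u) (q f v) = (len L u v)^2.
Proof. intros Hu Hv Huv. apply dist_d2. apply HU; assumption. Qed.

Lemma no_overlap f g v x y v' x' y' a b c a' b' c' :
  f <> g -> triangle f v x y -> triangle g v' x' y' ->
  0 < a -> 0 < b -> 0 < c -> a + b + c = 1 ->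
  0 <= a' -> 0 <= b' -> 0 <= c' -> a' + b' + c' = 1 ->
  affine a b c (q f v) (q f x) (q f y) = affine a' b' c' (q g v') (q g x') (q g y') -> False.
Proof.
  intros Hfg Tf Tg Ha Hb Hc Hs Ha' Hb' Hc' Hs' E.
  destruct HU as [_ [_ Hinj]].
  specialize (Hinj f g _ _ (bary_valid f v x y Tf a b c ltac:(lra) ltac:(lra) ltac:(lra) Hs)
                          (bary_valid g v' x' y' Tg a' b' c' Ha' Hb' Hc' Hs')).
  rewrite !img_bary in Hinj by assumption.
  destruct (same_pt_inv cutset _ _ (Hinj E)) as [_ [Heq|[u0 [v0 Hz]]]]; [congruence|].
  destruct Tf as [_ [_ [_ [Dvx [Dxy Dvy]]]]]. cbn [snd] in Hz.
  (* the interior point has three nonzero weights, so it is not on an edge *)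
  pose proof (Hz v) as Zv. pose proof (Hz x) as Zx. pose proof (Hz y) as Zy.
  rewrite bary_v in Zv. rewrite bary_x in Zx by congruence. rewrite bary_y in Zy by congruence.
  destruct (vtx_eq_dec v u0), (vtx_eq_dec x u0), (vtx_eq_dec y u0),
           (vtx_eq_dec v v0), (vtx_eq_dec x v0), (vtx_eq_dec y v0);
    subst; try congruence;
    solve [ lra | specialize (Zv ltac:(assumption) ltac:(assumption)); lra
          | specialize (Zx ltac:(assumption) ltac:(assumption)); lra
          | specialize (Zy ltac:(assumption) ltac:(assumption)); lra ].
Qed.

Lemma wedge_overlap f g v x y v' x' y' V u w r1 r2 r3 r4 A B :
  f <> g -> triangle f v x y -> triangle g v' x' y' ->
  q f v = V -> q f x = polar V u w r1 A -> q f y = polar V u w r2 B ->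
  q g v' = V -> q g x' = polar V u w r3 A -> q g y' = polar V u w r4 B ->
  0 < r1 -> 0 < r2 -> 0 < r3 -> 0 < r4 -> False.
Proof.
  intros Hfg Tf Tg Q1 Q2 Q3 Q4 Q5 Q6 R1 R2 R3 R4.
  (* the point at "distance" s along both sides of the sector lies in both faces *)
  assert (I1 : 0 < /r1) by (apply Rinv_0_lt_compat; lra).
  assert (I2 : 0 < /r2) by (apply Rinv_0_lt_compat; lra).
  assert (I3 : 0 < /r3) by (apply Rinv_0_lt_compat; lra).
  assert (I4 : 0 < /r4) by (apply Rinv_0_lt_compat; lra).
  set (Q := /r1 + /r2 + /r3 + /r4).
  set (s := / (4 * Q)).
  assert (Hs : 0 < s) by (apply Rinv_0_lt_compat; unfold Q; lra).
  assert (T : s * /r1 + s * /r2 + s * /r3 + s * /r4 = /4).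
  { replace (s * /r1 + s * /r2 + s * /r3 + s * /r4) with (s * Q) by (unfold Q; ring).
    unfold s. field. unfold Q. lra. }
  assert (P1 : 0 < s * /r1) by (apply Rmult_lt_0_compat; lra).
  assert (P2 : 0 < s * /r2) by (apply Rmult_lt_0_compat; lra).
  assert (P3 : 0 < s * /r3) by (apply Rmult_lt_0_compat; lra).
  assert (P4 : 0 < s * /r4) by (apply Rmult_lt_0_compat; lra).
  apply (no_overlap f g v x y v' x' y' (1 - s/r1 - s/r2) (s/r1) (s/r2)
           (1 - s/r3 - s/r4) (s/r3) (s/r4) Hfg Tf Tg); unfold Rdiv; try lra.
  rewrite Q1, Q2, Q3, Q4, Q5, Q6. unfold affine, polar; cbn [fst snd]. f_equal; field; lra.
Qed.

Lemma ray_in_wedge f g v x y v' x' y' V u w r1 r2 r3 A B C :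
  f <> g -> triangle f v x y -> triangle g v' x' y' ->
  q f v = V -> q f x = polar V u w r1 A -> q f y = polar V u w r2 B ->
  q g v' = V -> q g x' = polar V u w r3 C ->
  0 < r1 -> 0 < r2 -> 0 < r3 -> 0 < sin (B - A) -> 0 < sin (B - C) -> 0 < sin (C - A) -> False.
Proof.
  intros Hfg Tf Tg Q1 Q2 Q3 Q4 Q5 R1 R2 R3 S1 S2 S3.
  (* the direction C is a positive combination of the directions A and B *)
  assert (Ec : sin (B - A) * cos C = sin (B - C) * cos A + sin (C - A) * cos B)
    by (rewrite !sin_minus; ring).
  assert (Es : sin (B - A) * sin C = sin (B - C) * sin A + sin (C - A) * sin B)
    by (rewrite !sin_minus; ring).
  set (K1 := r3 * sin (B - C) / (sin (B - A) * r1)).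
  set (K2 := r3 * sin (C - A) / (sin (B - A) * r2)).
  assert (HK1 : 0 < K1) by (apply Rdiv_lt_0_compat; apply Rmult_lt_0_compat; lra).
  assert (HK2 : 0 < K2) by (apply Rdiv_lt_0_compat; apply Rmult_lt_0_compat; lra).
  set (t := / (2 * (1 + K1 + K2))).
  assert (Ht : 0 < t) by (apply Rinv_0_lt_compat; lra).
  assert (Ht2 : t * (1 + K1 + K2) = /2) by (unfold t; field; lra).
  assert (P1 : 0 < t * K1) by (apply Rmult_lt_0_compat; lra).
  assert (P2 : 0 < t * K2) by (apply Rmult_lt_0_compat; lra).
  apply (no_overlap f g v x y v' x' y' (1 - t*K1 - t*K2) (t*K1) (t*K2) (1 - t) t 0 Hfg Tf Tg);
    try lra.
  rewrite Q1, Q2, Q3, Q4, Q5. unfold affine, polar, K1, K2; cbn [fst snd].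
  replace (cos C) with ((sin (B - C) * cos A + sin (C - A) * cos B) / sin (B - A))
    by (rewrite <- Ec; field; lra).
  replace (sin C) with ((sin (B - C) * sin A + sin (C - A) * sin B) / sin (B - A))
    by (rewrite <- Es; field; lra).
  f_equal; field; lra.
Qed.

Definition placed (f : face) (v x y : vtx) (V u w : pt) (a th : R) : Prop :=
  q f v = V /\ q f x = polar V u w (len L v x) a /\ q f y = polar V u w (len L v y) (a + th).

Lemma place_first f v x y th : corner L f v x y th ->
  exists u w, orthonormal u w /\ placed f v x y (q f v) u w 0 th.
Proof.
  intros [[Fv [Fx [Fy [Dvx [Dxy Dvy]]]]] [Rx [Ry Law]]].
  destruct (frame_exists (q f v) (q f x) (q f y) (len L v x) (len L v y) th Rx)
    as [u [w [Ou [Px Py]]]].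
  - rewrite len_sym. apply layout_d2; auto.
  - rewrite len_sym. apply layout_d2; auto.
  - rewrite <- Law, len_sym. apply layout_d2; auto.
  - exists u, w. split; [exact Ou|]. split; [reflexivity|]. rewrite Rplus_0_l. auto.
Qed.

(* The key step: a face [g] glued to a laid out face [f] along an uncut edge
   [v y] keeps turning around [v] in the same direction; folding back onto [f]
   would overlap it. *)
Lemma hinge_step f g v x y z V u w a th : orthonormal u w ->
  corner L f v x y th -> corner L g v y z th -> f <> g -> ~ cut cutset v y ->
  placed f v x y V u w a th -> placed g v y z V u w (a + th) th.
Proof.
  intros Ou Cf Cg Hfg Hc [Qv [Qx Qy]].
  destruct Cf as [Tf [Rx [Ry _]]]. pose proof Tf as [Fv [Fx [Fy [Dvx [Dxy Dvy]]]]].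
  destruct Cg as [Tg [_ [Rz Law]]]. pose proof Tg as [Gv [Gy [Gz [_ [Dyz Dvz]]]]].
  destruct HU as [_ [Hglue _]].
  destruct (Hglue f g v y) as [Ev Ey]; [repeat split; assumption|].
  assert (QgV : q g v = V) by congruence.
  assert (QgY : q g y = polar V u w (len L v y) (a + th)) by congruence.
  split; [exact QgV|split; [exact QgY|]].
  destruct (hinge V u w (q g z) (len L v y) (len L v z) (a + th) th Ou Ry) as [Hz|Hz].
  - rewrite <- QgV, len_sym. apply layout_d2; auto.
  - rewrite <- QgY, <- Law, len_sym. apply layout_d2; auto.
  - exact Hz.
  - exfalso. replace (a + th - th) with a in Hz by ring.
    apply (wedge_overlap f g v x y v z y V u w (len L v x) (len L v y) (len L v z) (len L v y)
             a (a + th)); auto using triangle_swap.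
Qed.

Lemma placed_isosceles f v x y V u w a th :
  len L v x = len L y x -> len L v y = 2 * len L v x * cos th ->
  placed f v x y V u w a th ->
  placed f y v x (polar V u w (len L v y) (a + th)) u w (a + th - PI) th.
Proof.
  intros Hxx Hbase [Qv [Qx Qy]]. split; [exact Qy|split].
  - rewrite Qv, len_sym. symmetry. apply polar_back.
  - rewrite Qx, <- Hxx, Hbase, (polar_isosceles V u w (len L v x) a th). f_equal. ring.
Qed.

Lemma fan_unroll v (n : nat -> vtx) (F : nat -> face) th V u w a (m : nat) :
  orthonormal u w ->
  (forall j, (j <= m)%nat -> corner L (F j) v (n j) (n (S j)) th) ->
  (forall j, (j < m)%nat -> F j <> F (S j) /\ ~ cut cutset v (n (S j))) ->
  placed (F 0%nat) v (n 0%nat) (n 1%nat) V u w a th ->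
  placed (F m) v (n m) (n (S m)) V u w (a + INR m * th) th.
Proof.
  intros Ou HC HG H0. induction m as [|m IH].
  - cbn [INR]. rewrite Rmult_0_l, Rplus_0_r. exact H0.
  - rewrite S_INR. replace (a + (INR m + 1) * th) with (a + INR m * th + th) by ring.
    destruct (HG m ltac:(lia)) as [Hne Hc].
    apply (hinge_step (F m) (F (S m)) v (n m)); auto.
Qed.

(* A saddle vertex: five corners of angle [th] with [2 PI / 5 < th < PI / 2], so
   of total angle more than a full turn, cannot have four consecutive edges
   uncut, since the fifth face would then overlap the first. *)
Lemma saddle_obstruction v (n : nat -> vtx) (F : nat -> face) th :
  2 * PI / 5 < th < PI / 2 ->
  (forall j, (j <= 4)%nat -> corner L (F j) v (n j) (n (S j)) th) ->
  (forall j, (j < 4)%nat -> F j <> F (S j) /\ ~ cut cutset v (n (S j))) ->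
  F 4%nat <> F 0%nat -> False.
Proof.
  intros Hth HC HG H40.
  destruct (place_first (F 0%nat) v (n 0%nat) (n 1%nat) th (HC 0%nat ltac:(lia)))
    as [u [w [Ou P0]]].
  destruct (fan_unroll v n F th _ u w 0 4 Ou HC HG P0) as [Q4v [Q4x Q4y]].
  destruct P0 as [Q0v [Q0x _]]. rewrite <- polar_2PI in Q0x.
  destruct (HC 4%nat) as [T4 [R4 [R5 _]]]; [lia|].
  destruct (HC 0%nat) as [T0 [R0 _]]; [lia|].
  replace (0 + INR 4 * th) with (4 * th) in Q4x, Q4y by (cbn; ring).
  (* the side of [F 0] in direction [2 PI] lies inside the sector (4 th, 5 th) of [F 4] *)
  apply (ray_in_wedge (F 4%nat) (F 0%nat) v (n 4%nat) (n 5%nat) v (n 0%nat) (n 1%nat)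
           _ u w _ _ _ (4 * th) (4 * th + th) (2 * PI) H40 T4 T0 Q4v Q4x Q4y Q0v Q0x R4 R5 R0);
    apply sin_gt_0; lra.
Qed.

(* A cone vertex: three corners of angle [th] with [cos (3 th) <> 1] cannot all
   stay glued, since the third face would not close up with the first. *)
Lemma cone_obstruction v (n : nat -> vtx) (F : nat -> face) th :
  cos (3 * th) <> 1 ->
  (forall j, (j <= 2)%nat -> corner L (F j) v (n j) (n (S j)) th) ->
  (forall j, (j < 2)%nat -> F j <> F (S j) /\ ~ cut cutset v (n (S j))) ->
  F 2%nat <> F 0%nat -> n 3%nat = n 0%nat -> ~ cut cutset v (n 0%nat) -> False.
Proof.
  intros Hcos HC HG H20 Hn3 Hc0.
  destruct (place_first (F 0%nat) v (n 0%nat) (n 1%nat) th (HC 0%nat ltac:(lia)))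
    as [u [w [Ou P0]]].
  destruct (fan_unroll v n F th _ u w 0 2 Ou HC HG P0) as [Q2v [_ Q2y]].
  destruct P0 as [_ [Q0x _]]. rewrite Hn3 in Q2y.
  destruct (HC 2%nat) as [[F2v [_ [F2y _]]] _]; [lia|].
  destruct (HC 0%nat) as [[F0v [F0x [_ [D0 _]]]] [R0 _]]; [lia|]. rewrite Hn3 in F2y.
  destruct HU as [_ [Hglue _]].
  destruct (Hglue (F 2%nat) (F 0%nat) v (n 0%nat)) as [_ E]; [repeat split; auto|].
  rewrite Q2y, Q0x in E.
  apply Hcos. replace (3 * th) with (0 + INR 2 * th + th) by (cbn; ring).
  exact (polar_same_point _ u w _ _ Ou R0 E).
Qed.

(* The strip configuration (specific to the acute hat): three uncut edges at a
   vertex [v = p_i] followed by two uncut edges at the neighbouring [n4 = p_j].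
   Laid out, the copy of [n1] in [G2] falls inside the face [F0]. *)
Lemma strip_overlap F0 G2 v n0 n1 n4 m V u w : 0 < L ->
  F0 <> G2 -> triangle F0 v n0 n1 -> triangle G2 n4 m n1 ->
  q F0 v = V -> q F0 n0 = polar V u w L 0 ->
  q F0 n1 = polar V u w (base_len L (deg 10)) th85 ->
  q G2 n1 = polar (polar V u w (base_len L (deg 10)) (4 * th85)) u w
                  (base_len L (deg 10)) (7 * th85 - PI) -> False.
Proof.
  intros HL Hfg Tf Tg Qv Q0 Q1 Q1'.
  destruct strip_coefficients as [HK1 [HK2 HK3]].
  set (K1 := sin (th85 - 4 * th85) - sin (th85 - 7 * th85)) in *.
  set (K2 := sin (4 * th85) - sin (7 * th85)) in *.
  set (dd := base_len L (deg 10)) in *.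
  assert (Hdd : dd = 2 * L * cos th85) by apply base_len_10.
  assert (Hdd_pos : 0 < dd) by (apply base_len_10_pos, HL).
  assert (Sth : 0 < sin th85) by (unfold th85; apply sin_deg_pos; lra).
  (* the weights of the copy of [n1] in [F0] *)
  set (b := dd * K1 / (L * sin th85)).
  set (c := K2 / sin th85).
  assert (Hb : 0 < b) by (apply Rdiv_lt_0_compat; apply Rmult_lt_0_compat; lra).
  assert (Hc : 0 < c) by (apply Rdiv_lt_0_compat; lra).
  assert (Ha : 0 < 1 - b - c).
  { replace (1 - b - c) with ((sin th85 - 2 * cos th85 * K1 - K2) / sin th85)
      by (unfold b, c; rewrite Hdd; field; split; lra).
    apply Rdiv_lt_0_compat; lra. }
  apply (no_overlap F0 G2 v n0 n1 n1 n4 m (1 - b - c) b c 1 0 0 Hfg Tf); try lra.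
  - destruct Tg as [? [? [? [? [? ?]]]]]. repeat split; auto.
  - rewrite Qv, Q0, Q1, Q1', polar_minus_PI. unfold affine, polar; cbn [fst snd].
    rewrite cos_0, sin_0.
    (* express [cos (4 th)] and [cos (7 th)] through the sines above *)
    assert (Ec : forall C, sin th85 * cos C = sin (th85 - C) + sin C * cos th85)
      by (intro C; rewrite sin_minus; ring).
    replace (cos (4 * th85)) with ((sin (th85 - 4 * th85) + sin (4 * th85) * cos th85) / sin th85)
      by (rewrite <- Ec; field; lra).
    replace (cos (7 * th85)) with ((sin (th85 - 7 * th85) + sin (7 * th85) * cos th85) / sin th85)
      by (rewrite <- Ec; field; lra).
    unfold b, c, K1, K2. f_equal; field; split; lra.
Qed.

(* A strip cannot be unfolded: unroll the fan at [v] over [F0 .. F3], then the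
   fan at [n4] over [F3, G1, G2], and compare [G2] with [F0]. *)
Lemma strip_obstruction (v n0 n1 n2 n3 n4 m : vtx) (F0 F1 F2 F3 G1 G2 : face) :
  0 < L ->
  corner L F0 v n0 n1 th85 -> corner L F1 v n1 n2 th85 -> corner L F2 v n2 n3 th85 ->
  corner L F3 v n3 n4 th85 -> corner L F3 n4 v n3 th85 -> corner L G1 n4 n3 m th85 ->
  corner L G2 n4 m n1 th85 ->
  F0 <> F1 -> F1 <> F2 -> F2 <> F3 -> F3 <> G1 -> G1 <> G2 -> G2 <> F0 ->
  len L v n0 = L -> len L v n1 = base_len L (deg 10) -> len L v n3 = L ->
  len L v n4 = base_len L (deg 10) -> len L n4 n3 = L -> len L n4 n1 = base_len L (deg 10) ->
  ~ cut cutset v n1 -> ~ cut cutset v n2 -> ~ cut cutset v n3 ->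
  ~ cut cutset n4 n3 -> ~ cut cutset n4 m -> False.
Proof.
  intros HL C0 C1 C2 C3 C3' D1 D2 H01 H12 H23 H3G HG12 HG20 L0 L1 L3 L4 L43 L41 c1 c2 c3 c4 c5.
  set (dd := base_len L (deg 10)) in *.
  destruct (place_first F0 v n0 n1 th85 C0) as [u [w [Ou P0]]].
  set (V := q F0 v) in *.
  set (n := fun j => match j with 0 => n0 | 1 => n1 | 2 => n2 | 3 => n3 | _ => n4 end%nat).
  set (F := fun j => match j with 0 => F0 | 1 => F1 | 2 => F2 | _ => F3 end%nat).
  destruct (fan_unroll v n F th85 V u w 0 3 Ou) as [Q3v [Q3x Q3y]].
  { intros [|[|[|[|j]]]] Hj; [exact C0|exact C1|exact C2|exact C3|lia]. }
  { intros [|[|[|j]]] Hj; repeat split; auto; lia. }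
  { exact P0. }
  cbn [n F] in Q3v, Q3x, Q3y. replace (0 + INR 3 * th85) with (3 * th85) in * by (cbn; ring).
  assert (P3 : placed F3 n4 v n3 (q F3 n4) u w (4 * th85 - PI) th85).
  { rewrite Q3y. replace (4 * th85 - PI) with (3 * th85 + th85 - PI) by ring.
    apply placed_isosceles; [congruence | rewrite L4, L3; apply base_len_10 | ].
    repeat split; assumption. }
  set (n' := fun j => match j with 0 => v | 1 => n3 | 2 => m | _ => n1 end%nat).
  set (G := fun j => match j with 0 => F3 | 1 => G1 | _ => G2 end%nat).
  destruct (fan_unroll n4 n' G th85 (q F3 n4) u w (4 * th85 - PI) 2 Ou) as [_ [_ Q1']].
  { intros [|[|[|j]]] Hj; [exact C3'|exact D1|exact D2|lia]. }
  { intros [|[|j]] Hj; repeat split; auto; lia. }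
  { exact P3. }
  cbn [n' G] in Q1'. rewrite L41 in Q1'.
  replace (4 * th85 - PI + INR 2 * th85 + th85) with (7 * th85 - PI) in Q1' by (cbn; ring).
  destruct P0 as [_ [Q0 Q1]]. rewrite L0 in Q0. rewrite L1, Rplus_0_l in Q1.
  apply (strip_overlap F0 G2 v n0 n1 n4 m V u w); auto.
  - apply C0.
  - apply D2.
  - rewrite Q1', Q3y, L4. replace (3 * th85 + th85) with (4 * th85) by ring. reflexivity.
Qed.

End Unfolding.

(* The link of [p_i]: its five neighbours in cyclic order (index read modulo 5)
   and the face [sector i k] between neighbours [k] and [k + 1]. *)
Fixpoint nbr (i : I3) (k : nat) : vtx :=
  match k with
  | 0 => A (nx i) | 1 => A (nx (nx i)) | 2 => P (nx i) | 3 => O | 4 => P (nx (nx i))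
  | S (S (S (S (S k)))) => nbr i k
  end%nat.

Fixpoint sector (i : I3) (k : nat) : face :=
  match k with
  | 0 => Brim (nx i) | 1 => Band (nx (nx i)) | 2 => Crown i | 3 => Crown (nx (nx i))
  | 4 => Band (nx i)
  | S (S (S (S (S k)))) => sector i k
  end%nat.

(* The edge sets that an unfolding must cut somewhere: the three edges at [o];
   four consecutive edges at some [p_i]; the edges of a strip, in both
   orientations around [p_i]. *)
Definition cone_window : list (vtx * vtx) := [(O, P i0); (O, P i1); (O, P i2)].

Definition saddle_window (i : I3) (k : nat) : list (vtx * vtx) :=
  map (fun j => (P i, nbr i (k + j))) [1; 2; 3; 4]%nat.

Definition strip_window (v n1 n2 n3 n4 m : vtx) : list (vtx * vtx) :=
  [(v, n1); (v, n2); (v, n3); (n4, n3); (n4, m)].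

Definition strip_windows (i : I3) : list (list (vtx * vtx)) :=
  [strip_window (P i) (nbr i 4) (nbr i 5) (nbr i 6) (nbr i 7) (nbr (nx i) 6);
   strip_window (P i) (nbr i 7) (nbr i 6) (nbr i 5) (nbr i 4) (nbr (nx (nx i)) 5)].

Definition all_I3 : list I3 := [i0; i1; i2].

Definition obstructions : list (list (vtx * vtx)) :=
  cone_window ::
  flat_map (fun i => map (saddle_window i) [0; 1; 2; 3; 4]%nat ++ strip_windows i) all_I3.

Ltac in_face_tac :=
  unfold in_face; cbn;
  first [left; reflexivity | right; left; reflexivity | right; right; reflexivity].

Ltac triangle_tac := repeat split; first [discriminate | in_face_tac].

Ltac in_list_tac := solve [cbn; repeat first [left; reflexivity | right]].

Definition uncut_window (S : vtx -> vtx -> Prop) (ob : list (vtx * vtx)) : Prop :=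
  forall e, In e ob -> ~ cut S (fst e) (snd e).

Section Windows.
Variables (L : R) (cutset : vtx -> vtx -> Prop) (q : layout).
Hypotheses (HL : 0 < L) (HU : is_unfolding L cutset q).

Lemma cone_window_cut : ~ uncut_window cutset cone_window.
Proof.
  intro Hunc.
  apply (cone_obstruction L cutset q HU O
           (fun j => match j with 0 => P i0 | 1 => P i1 | 2 => P i2 | _ => P i0 end%nat)
           (fun j => match j with 0 => Crown i0 | 1 => Crown i1 | _ => Crown i2 end%nat)
           (deg 10) cos_30_ne_1).
  - intros [|[|[|j]]] Hj; try lia; apply corner_at_O; auto; triangle_tac.
  - intros [|[|j]] Hj; try lia; split; try discriminate; apply (Hunc (_, _)); in_list_tac.
  - discriminate.
  - reflexivity.
  - apply (Hunc (_, _)); in_list_tac.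
Qed.

Lemma saddle_window_cut i k : (k < 5)%nat -> ~ uncut_window cutset (saddle_window i k).
Proof.
  intros Hk Hunc.
  apply (saddle_obstruction L cutset q HU (P i) (fun j => nbr i (k + j))
           (fun j => sector i (k + j)) th85 th85_range).
  - intros j Hj. apply corner_at_P; [exact HL|].
    destruct i; do 5 (destruct k as [|k]; [do 5 (destruct j as [|j]; [triangle_tac|]); lia|]);
      lia.
  - intros j Hj. split.
    + destruct i; do 5 (destruct k as [|k]; [do 4 (destruct j as [|j]; [discriminate|]); lia|]);
        lia.
    + apply (Hunc (_, _)), in_map_iff. exists (S j). split; [reflexivity|].
      do 4 (destruct j as [|j]; [in_list_tac|]); lia.
  - destruct i; do 5 (destruct k as [|k]; [discriminate|]); lia.
Qed.

Lemma strip_windows_cut i ob : In ob (strip_windows i) -> ~ uncut_window cutset ob.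
Proof.
  intros Hob Hunc. destruct Hob as [<-|[<-|[]]].
  - apply (strip_obstruction L cutset q HU (P i) (nbr i 3) (nbr i 4) (nbr i 5) (nbr i 6)
             (nbr i 7) (nbr (nx i) 6) (sector i 3) (sector i 4) (sector i 5) (sector i 6)
             (sector (nx i) 5) (sector (nx i) 6) HL);
      try (apply (Hunc (_, _)); in_list_tac);
      destruct i; cbn;
      solve [ discriminate | reflexivity | apply corner_at_P; [exact HL|triangle_tac] ].
  - apply (strip_obstruction L cutset q HU (P i) (nbr i 8) (nbr i 7) (nbr i 6) (nbr i 5)
             (nbr i 4) (nbr (nx (nx i)) 5) (sector i 7) (sector i 6) (sector i 5) (sector i 4)
             (sector (nx (nx i)) 5) (sector (nx (nx i)) 4) HL);
      try (apply (Hunc (_, _)); in_list_tac);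
      destruct i; cbn;
      solve [ discriminate | reflexivity | apply corner_at_P; [exact HL|triangle_tac] ].
Qed.

Lemma obstructions_cut ob : In ob obstructions -> ~ uncut_window cutset ob.
Proof.
  intros [<-|Hin]; [exact cone_window_cut|].
  apply in_flat_map in Hin as [i [_ Hin]]. apply in_app_or in Hin as [Hin|Hin].
  - apply in_map_iff in Hin as [k [<- Hk]]. apply saddle_window_cut.
    cbn in Hk. lia.
  - exact (strip_windows_cut i ob Hin).
Qed.

End Windows.

Open Scope bool_scope.

Lemma face_eq_dec (f g : face) : {f = g} + {f <> g}.
Proof. decide equality; decide equality. Defined.

Definition vtx_eqb (u v : vtx) : bool := if vtx_eq_dec u v then true else false.
Definition face_eqb (f g : face) : bool := if face_eq_dec f g then true else false.

Lemma vtx_eqb_spec u v : vtx_eqb u v = true <-> u = v.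
Proof. unfold vtx_eqb. destruct vtx_eq_dec; split; congruence. Qed.

Lemma face_eqb_spec f g : face_eqb f g = true <-> f = g.
Proof. unfold face_eqb. destruct face_eq_dec; split; congruence. Qed.

Definition in_faceb (f : face) (v : vtx) : bool :=
  let '(a, b, c) := face_verts f in vtx_eqb v a || vtx_eqb v b || vtx_eqb v c.

Lemma in_faceb_spec f v : in_faceb f v = true <-> in_face f v.
Proof.
  unfold in_faceb, in_face. destruct (face_verts f) as [[a b] c].
  rewrite !Bool.orb_true_iff, !vtx_eqb_spec. tauto.
Qed.

Definition all_vertices : list vtx := [A i0; A i1; A i2; P i0; P i1; P i2; O].
Definition all_faces : list face := flat_map (fun i => [Brim i; Band i; Crown i]) all_I3.

Lemma all_vertices_spec v : In v all_vertices.
Proof. destruct v as [[]|[]|]; cbn; tauto. Qed.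

Lemma all_faces_spec f : In f all_faces.
Proof. destruct f as [[]|[]|[]]; cbn; tauto. Qed.

Definition same_edge (e : vtx * vtx) (u v : vtx) : bool :=
  (vtx_eqb (fst e) u && vtx_eqb (snd e) v) || (vtx_eqb (fst e) v && vtx_eqb (snd e) u).

Lemma same_edge_cut S e u v : same_edge e u v = true -> cut S (fst e) (snd e) -> cut S u v.
Proof.
  unfold same_edge, cut. rewrite Bool.orb_true_iff, !Bool.andb_true_iff, !vtx_eqb_spec.
  intros [[<- <-]|[<- <-]]; tauto.
Qed.

(* The dual graph of the hat: the twelve interior edges, each with its two faces.
   A cut pattern lists, edge by edge, whether the edge is cut. *)
Definition dual_edges : list (vtx * vtx * (face * face)) :=
  [(O, P i0, (Crown i2, Crown i0)); (O, P i1, (Crown i0, Crown i1));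
   (O, P i2, (Crown i1, Crown i2)); (P i0, P i1, (Crown i0, Band i2));
   (P i1, P i2, (Crown i1, Band i0)); (P i2, P i0, (Crown i2, Band i1));
   (A i0, P i1, (Band i0, Brim i2)); (A i0, P i2, (Band i0, Brim i0));
   (A i1, P i2, (Band i1, Brim i0)); (A i1, P i0, (Band i1, Brim i1));
   (A i2, P i0, (Band i2, Brim i1)); (A i2, P i1, (Band i2, Brim i2))].

Definition cutb (c : list bool) (u v : vtx) : bool :=
  existsb (fun db => snd db && same_edge (fst (fst db)) u v) (combine dual_edges c).

Definition uncut_links (c : list bool) : list (face * face) :=
  map (fun db => snd (fst db)) (filter (fun db => negb (snd db)) (combine dual_edges c)).

Definition memb (f : face) (R : list face) : bool := existsb (face_eqb f) R.

Definition linked (E : list (face * face)) (R : list face) (g : face) : bool :=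
  existsb (fun fg => (face_eqb (fst fg) g && memb (snd fg) R)
                     || (face_eqb (snd fg) g && memb (fst fg) R)) E.

(* The faces reached from [Brim i0] (eight rounds suffice for nine faces). *)
Definition component (E : list (face * face)) : list face :=
  Nat.iter 8 (fun R => filter (fun g => memb g R || linked E R g) all_faces) [Brim i0].

Definition closedb (E : list (face * face)) (R : list face) : bool :=
  forallb (fun fg => Bool.eqb (memb (fst fg) R) (memb (snd fg) R)) E.

(* The pattern splits the hat: a set of faces closed under the uncut links
   contains [Brim i0] but misses some face. *)
Definition disconnected (c : list bool) : bool :=
  let E := uncut_links c in
  let R := component E in
  memb (Brim i0) R && closedb E R && existsb (fun g => negb (memb g R)) all_faces.

Definition blocked (c : list bool) (ob : list (vtx * vtx)) : bool :=
  forallb (fun e => negb (cutb c (fst e) (snd e))) ob.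

Definition pattern_ok (c : list bool) : bool :=
  existsb (blocked c) obstructions || disconnected c.

Fixpoint all_patterns (n : nat) : list (list bool) :=
  match n with
  | 0 => [[]]
  | S m => flat_map (fun l => [true :: l; false :: l]) (all_patterns m)
  end%nat.

Lemma all_patterns_spec (l : list bool) : In l (all_patterns (length l)).
Proof.
  induction l as [|b l IH]; cbn; [tauto|].
  apply in_flat_map. exists l. split; [exact IH|]. destruct b; cbn; tauto.
Qed.

Lemma every_pattern_ok : forallb pattern_ok (all_patterns 12) = true.
Proof. vm_compute. reflexivity. Qed.

Lemma dual_edges_complete :
  forallb (fun f => forallb (fun g => forallb (fun u => forallb (fun v =>
    negb (negb (face_eqb f g) && negb (vtx_eqb u v)
          && in_faceb f u && in_faceb f v && in_faceb g u && in_faceb g v)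
    || existsb (fun d => same_edge (fst d) u v
                         && ((face_eqb (fst (snd d)) f && face_eqb (snd (snd d)) g)
                             || (face_eqb (fst (snd d)) g && face_eqb (snd (snd d)) f)))
         dual_edges) all_vertices) all_vertices) all_faces) all_faces = true.
Proof. vm_compute. reflexivity. Qed.

Lemma windows_interior :
  forallb (fun ob => forallb (fun e =>
    existsb (fun d => same_edge (fst d) (fst e) (snd e)) dual_edges) ob) obstructions = true.
Proof. vm_compute. reflexivity. Qed.

Definition cut_bit (S : vtx -> vtx -> Prop) (d : vtx * vtx * (face * face)) : bool :=
  if excluded_middle_informative (cut S (fst (fst d)) (snd (fst d))) then true else false.

Definition pattern_of (S : vtx -> vtx -> Prop) : list bool := map (cut_bit S) dual_edges.

Lemma in_combine_map {X Y : Type} (h : X -> Y) (l : list X) (x : X) :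
  In x l -> In (x, h x) (combine l (map h l)).
Proof. induction l as [|y l IH]; cbn; [tauto|]. intros [<-|H]; [left|right]; auto. Qed.


Lemma cut_in_pattern S u v :
  existsb (fun d => same_edge (fst d) u v) dual_edges = true ->
  cut S u v -> cutb (pattern_of S) u v = true.
Proof.
  intros Hint Hc. apply existsb_exists in Hint as [d [Hd He]].
  apply existsb_exists. exists (d, cut_bit S d). split; [apply in_combine_map, Hd|].
  cbn. unfold cut_bit. destruct excluded_middle_informative as [|Hnc]; [exact He|].
  exfalso. apply Hnc. unfold same_edge in He.
  rewrite Bool.orb_true_iff, !Bool.andb_true_iff, !vtx_eqb_spec in He.
  unfold cut in *. destruct He as [[-> ->]|[-> ->]]; tauto.
Qed.

Lemma glued_linked S f g u v : glued S f g u v ->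
  In (f, g) (uncut_links (pattern_of S)) \/ In (g, f) (uncut_links (pattern_of S)).
Proof.
  intros (Hfg & Huv & Fu & Fv & Gu & Gv & Hc).
  pose proof dual_edges_complete as C. rewrite forallb_forall in C.
  specialize (C f (all_faces_spec f)). rewrite forallb_forall in C.
  specialize (C g (all_faces_spec g)). rewrite forallb_forall in C.
  specialize (C u (all_vertices_spec u)). rewrite forallb_forall in C.
  specialize (C v (all_vertices_spec v)).
  apply in_faceb_spec in Fu, Fv, Gu, Gv. rewrite Fu, Fv, Gu, Gv in C.
  replace (face_eqb f g) with false in C
    by (symmetry; apply Bool.not_true_iff_false; rewrite face_eqb_spec; exact Hfg).
  replace (vtx_eqb u v) with false in C
    by (symmetry; apply Bool.not_true_iff_false; rewrite vtx_eqb_spec; exact Huv).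
  cbn [negb andb orb] in C. apply existsb_exists in C as [d [Hd Hdm]].
  apply Bool.andb_true_iff in Hdm as [He Hfaces].
  assert (Hlink : In (snd d) (uncut_links (pattern_of S))).
  { unfold uncut_links. apply in_map_iff. exists (d, false). split; [reflexivity|].
    apply filter_In. split; [|reflexivity].
    replace false with (cut_bit S d) at 1.
    - apply in_combine_map. exact Hd.
    - unfold cut_bit. destruct excluded_middle_informative as [Hcd|]; [|reflexivity].
      exfalso. apply Hc. exact (same_edge_cut S _ u v He Hcd). }
  destruct d as [e [f' g']]; cbn [fst snd] in Hfaces, Hlink.
  rewrite Bool.orb_true_iff, !Bool.andb_true_iff, !face_eqb_spec in Hfaces.
  destruct Hfaces as [[-> ->]|[-> ->]]; auto.
Qed.

Lemma closed_reach S R f g :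
  closedb (uncut_links (pattern_of S)) R = true -> memb f R = true ->
  clos_refl_trans face (fun f g => exists u v, glued S f g u v) f g -> memb g R = true.
Proof.
  intros Hcl Hf Hreach. unfold closedb in Hcl. rewrite forallb_forall in Hcl.
  induction Hreach as [f g [u [v Hg]]| |]; auto.
  destruct (glued_linked S f g u v Hg) as [Hl|Hl]; apply Hcl in Hl; cbn in Hl;
    apply Bool.eqb_prop in Hl; congruence.
Qed.

Lemma connected_not_disconnected S :
  cut_connected S -> disconnected (pattern_of S) = false.
Proof.
  intro Hconn. unfold disconnected.
  set (R := component (uncut_links (pattern_of S))).
  destruct (memb (Brim i0) R) eqn:H0; [|reflexivity].
  destruct (closedb _ R) eqn:Hcl; [|reflexivity]. rewrite !Bool.andb_true_l.
  apply Bool.not_true_iff_false. intro Hmiss.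
  apply existsb_exists in Hmiss as [g [_ Hg]].
  rewrite (closed_reach S R (Brim i0) g Hcl H0 (Hconn (Brim i0) g)) in Hg. discriminate.
Qed.

Lemma unfolding_not_blocked L S q : 0 < L -> is_unfolding L S q ->
  existsb (blocked (pattern_of S)) obstructions = false.
Proof.
  intros HL HU. apply Bool.not_true_iff_false. intro Hb.
  apply existsb_exists in Hb as [ob [Hob Hb]].
  apply (obstructions_cut L S q HL HU ob Hob). intros e He Hc.
  unfold blocked in Hb. rewrite forallb_forall in Hb.
  pose proof windows_interior as W. rewrite forallb_forall in W.
  specialize (W ob Hob). rewrite forallb_forall in W.
  apply (cut_in_pattern S _ _ (W e He)) in Hc.
  specialize (Hb e He). rewrite Hc in Hb. discriminate.
Qed.

Theorem lemma4 : forall L : R, 0 < L ->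
  ~ exists S : vtx -> vtx -> Prop,
      (forall u v, S u v -> interior_edge u v) /\
      cut_connected S /\
      exists q : layout, is_unfolding L S q.
Proof.
  intros L HL [S [_ [Hconn [q HU]]]].
  assert (Hok : pattern_ok (pattern_of S) = true).
  { pose proof every_pattern_ok as C. rewrite forallb_forall in C. apply C.
    replace 12%nat with (length (pattern_of S))
      by (unfold pattern_of; rewrite length_map; reflexivity).
    apply all_patterns_spec. }
  unfold pattern_ok in Hok.
  rewrite (unfolding_not_blocked L S q HL HU), (connected_not_disconnected S Hconn) in Hok.
  discriminate.
Qed.
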